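(* Let $W$ be a weak $V$-module, $z$ a nonzero complex number and $\alpha\in W^*$. The following are equivalent: (a) $\alpha\in\mathcal D_{P(z)}(W)$; (b) for each $v\in V$ there exist $l,k\in\mathbb N$ such that for every $w\in W$, $x^l(x-z)^k\langle\alpha,Y^o(v,x)w\rangle$ is a polynomial in $x$; (c) for each $v\in V$ there exist $l,k\in\mathbb N$ such that $x^l(x-z)^kY^*(v,x)\alpha\in W^*[[x]]$; (d) for each $v\in V$ there exists $k\in\mathbb N$ such that $(x-z)^kY^*(v,x)\alpha\in W^*((x))$.
   Context: $V$ is a vertex operator algebra with vacuum $\mathbf 1$, Virasoro element $\omega$, $Y(\omega,x)=\sum_{n}L(n)x^{-n-2}$, and $V=\coprod_{n\in\mathbb Z}V_{(n)}$ graded by $L(0)$-eigenvalues. The formal delta function is $\delta(x)=\sum_{n\in\mathbb Z}x^n$; binomial expressions $(x_1-x_2)^n$ are expanded in nonnegative powers of the second variable. A weak $V$-module is a vector space $W$ with a linear map $Y_W:V\to(\mathrm{End}\,W)[[x,x^{-1}]]$ such that $Y_W(v,x)w\in W((x))$, $Y_W(\mathbf 1,x)=\mathrm{id}_W$, and the Jacobi identity $x_0^{-1}\delta(\frac{x_1-x_2}{x_0})Y_W(u,x_1)Y_W(v,x_2)-x_0^{-1}\delta(\frac{x_2-x_1}{-x_0})Y_W(v,x_2)Y_W(u,x_1)=x_2^{-1}\delta(\frac{x_1-x_0}{x_2})Y_W(Y(u,x_0)v,x_2)$ holds. For $v\in V$ set $Y^o(v,x)=Y_W(e^{xL(1)}(-x^{-2})^{L(0)}v,x^{-1})$;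 then $Y^o(v,x)w\in W((x^{-1}))$. For $\alpha\in W^*$ define $Y^*(v,x)\alpha=\sum_{n\in\mathbb Z}v^*_n\alpha\,x^{-n-1}\in W^*[[x,x^{-1}]]$ by $\langle Y^*(v,x)\alpha,w\rangle=\langle\alpha,Y^o(v,x)w\rangle$ for $w\in W$. For a nonzero complex number $z$, $\alpha\in W^*$ is a $P(z)$-linear functional if for all $v\in V,w\in W$ the series $\langle\alpha,Y^o(v,x)w\rangle$ converges absolutely in $|x|>|z|$ to a rational function in $\mathbb C[x,x^{-1},(x-z)^{-1}]$, and for each fixed $v$ the orders of the poles at $0$ and at $z$ of these rational functions are bounded independently of $w$. $\mathcal D_{P(z)}(W)$ is the space of $P(z)$-linear functionals on $W$. *)

From HB Require Import structures.
From mathcomp Require Import all_boot all_order all_algebra.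
From mathcomp Require Import complex.
From mathcomp Require Import boolp classical_sets fsbigop reals.

Set Implicit Arguments.
Unset Strict Implicit.
Unset Printing Implicit Defensive.

Import Order.TTheory GRing.Theory Num.Theory.
Local Open Scope ring_scope.
Local Open Scope classical_set_scope.
Local Open Scope complex_scope.

Section VOA.
Variable C : fieldType.

(* A vertex operator on M indexed by V: Y u n w = u_n w, i.e. the coefficient
   of x^{-n-1} in Y(u,x)w. *)
Definition vop (V M : lmodType C) := V -> int -> M -> M.

Definition binz (m : int) (i : nat) : C :=
  (\prod_(j < i) (m - (j : int))%:~R) / (i`!)%:R.

Definition bilinear_vop (V M : lmodType C) (Y : vop V M) :=
  forall n : int,
    (forall (a : C) (u1 u2 : V) (w : M), Y (a *: u1 + u2) n w = a *: Y u1 n w + Y u2 n w)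
 /\ (forall (u : V) (a : C) (w1 w2 : M), Y u n (a *: w1 + w2) = a *: Y u n w1 + Y u n w2).

(* Y(u,x)w \in M((x)) *)
Definition truncated_vop (V M : lmodType C) (Y : vop V M) :=
  forall (u : V) (w : M), exists N : int, forall n : int, N <= n -> Y u n w = 0.

(* The Jacobi identity, written coefficientwise: the coefficient of
   x0^{-l-1} x1^{-m-1} x2^{-n-1} of the three terms.  The sums over i are
   finitely supported (by truncation); \sum_(i \in [set: nat]) is the
   finitely-supported sum of fsbigop. *)
Definition jacobi_id (V M : lmodType C) (Y : vop V V) (YM : vop V M) :=
  forall (u v : V) (w : M) (l m n : int),
    \sum_(i \in [set: nat]) (binz m i *: YM (Y u (l + i%:Z) v) (m + n - i%:Z) w)
  = \sum_(i \in [set: nat])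
       (((-1) ^+ i * binz l i) *:
         (YM u (m + l - i%:Z) (YM v (n + i%:Z) w)
          - (-1) ^ l *: YM v (n + l - i%:Z) (YM u (m + i%:Z) w))).

(* Grading V = coprod_{n in Z} V_(n), given by the projections pi n onto V_(n);
   V_(n) is the L(0)-eigenspace of eigenvalue n (L(0) = omega_1). *)
Definition is_grading (V : lmodType C) (L0 : V -> V) (pi : int -> V -> V) :=
  [/\ (forall n : int, forall (a : C) (v1 v2 : V), pi n (a *: v1 + v2) = a *: pi n v1 + pi n v2),
      (forall (m n : int) (v : V), pi m (pi n v) = if m == n then pi n v else 0),
      (forall v : V, exists N : nat, (forall n : int, (N < `|n|)%N -> pi n v = 0)
                                    /\ v = \sum_(n \in [set: int]) pi n v) &
      (forall (n : int) (v : V), L0 (pi n v) = n%:~R *: pi n v)].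

Definition is_VOA (V : lmodType C) (Y : vop V V) (vac om : V)
    (pi : int -> V -> V) :=
  [/\ bilinear_vop Y /\ truncated_vop Y,
      (forall (n : int) (v : V), Y vac n v = if n == -1 then v else 0)
      /\ (forall (v : V) (n : int), 0 <= n -> Y v n vac = 0)
      /\ (forall v, Y v (-1) vac = v),
      jacobi_id Y Y,
      (* Virasoro relations, L(n) = omega_{n+1}, with some central charge c,
         and the L(-1)-derivative property Y(L(-1)u,x) = d/dx Y(u,x) *)
      (exists c : C, forall (m n : int) (v : V),
         Y om (m + 1) (Y om (n + 1) v) - Y om (n + 1) (Y om (m + 1) v)
         = (m - n)%:~R *: Y om (m + n + 1) v
           + (if m + n == 0 then (m ^+ 3 - m)%:~R / 12%:R * c else 0) *: v)
      /\ (forall (u : V) (n : int) (v : V), Y (Y om 0 u) n v = - n%:~R *: Y u (n - 1) v) &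
      [/\ is_grading (Y om 1) pi /\ pi 2 om = om,
          (forall n : int, exists s : seq V, forall v : V,
              exists c : nat -> C, pi n v = \sum_(i < size s) c i *: s`_i) &
          (exists N : int, forall (n : int) (v : V), n < N -> pi n v = 0)]].

Definition is_weak_module (V : lmodType C) (Y : vop V V) (vac : V)
    (W : lmodType C) (YW : vop V W) :=
  [/\ bilinear_vop YW, truncated_vop YW,
      (forall (n : int) (w : W), YW vac n w = if n == -1 then w else 0) &
      jacobi_id Y YW].

(* Coefficients of Y^o(v,x) = Y_W(e^{xL(1)}(-x^{-2})^{L(0)} v, x^{-1})
   = sum_k v^o_k x^{-k-1}, with L(1) = omega_2:
   v^o_k = sum_n (-1)^n sum_j 1/j! ((L(1)^j pi_n v)_{2n-k-2-j}). *)
Definition Yo_coef (V : lmodType C) (Y : vop V V) (om : V) (pi : int -> V -> V)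
    (W : lmodType C) (YW : vop V W) (v : V) (k : int) (w : W) : W :=
  \sum_(n \in [set: int]) \sum_(j \in [set: nat])
     (((-1) ^ n / (j`!)%:R) *: YW (iter j (Y om 2) (pi n v)) (2 * n - k - 2 - j%:Z) w).

(* coefficient of x^p in <alpha, Y^o(v,x) w> *)
Definition Yo_pair (V : lmodType C) (Y : vop V V) (om : V) (pi : int -> V -> V)
    (W : lmodType C) (YW : vop V W) (alpha : W -> C) (v : V) (w : W) : int -> C :=
  fun p => alpha (Yo_coef Y om pi YW v (- p - 1) w).

(* coefficient of x^p in Y^*(v,x) alpha, an element of W^* :
   <Y^*(v,x)alpha, w> = <alpha, Y^o(v,x) w> *)
Definition Ystar (V : lmodType C) (Y : vop V V) (om : V) (pi : int -> V -> V)
    (W : lmodType C) (YW : vop V W) (v : V) (alpha : W -> C) : int -> (W -> C) :=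
  fun p w => alpha (Yo_coef Y om pi YW v (- p - 1) w).

Definition pmul_ser (q : {poly C}) (f : int -> C) : int -> C :=
  fun p => \sum_(i < size q) q`_i * f (p - i%:Z).

Definition pmul_dser (W : lmodType C) (q : {poly C}) (F : int -> (W -> C)) : int -> (W -> C) :=
  fun p w => \sum_(i < size q) q`_i * F (p - i%:Z) w.

Definition lin_functional (W : lmodType C) (alpha : W -> C) :=
  forall (a : C) (w1 w2 : W), alpha (a *: w1 + w2) = a * alpha w1 + alpha w2.

End VOA.

Section Analytic.
Variable R : realType.
Local Notation C := (R[i]).

Definition symsum (g : int -> C) (N : nat) : C :=
  \sum_(i < (N + N).+1) g (i%:Z - N%:Z).

Definition abs_conv_to (a : int -> C) (x s : C) :=
  (exists B : C, forall N : nat, symsum (fun p => `|a p * x ^ p|) N <= B)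
  /\ (forall e : C, 0 < e -> exists N0 : nat, forall N : nat, (N0 <= N)%N ->
        `|symsum (fun p => a p * x ^ p) N - s| < e).

Definition rat_fun_0z (z : C) (f : C -> C) :=
  exists (q : {poly C}) (a b : nat), forall x : C, x != 0 -> x != z ->
    f x = q.[x] / (x ^+ a * (x - z) ^+ b).

Definition pole0_le (z : C) (f : C -> C) (m : nat) :=
  exists (q : {poly C}) (b : nat), forall x : C, x != 0 -> x != z ->
    f x = q.[x] / (x ^+ m * (x - z) ^+ b).

Definition polez_le (z : C) (f : C -> C) (m : nat) :=
  exists (q : {poly C}) (a : nat), forall x : C, x != 0 -> x != z ->
    f x = q.[x] / (x ^+ a * (x - z) ^+ m).

Definition Pz_linear (V : lmodType C) (Y : vop V V) (om : V) (pi : int -> V -> V)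
    (W : lmodType C) (YW : vop V W) (z : C) (alpha : W -> C) :=
  forall v : V, exists L K : nat, forall w : W, exists f : C -> C,
    (forall x : C, `|z| < `|x| -> abs_conv_to (Yo_pair Y om pi YW alpha v w) x (f x))
    /\ rat_fun_0z z f /\ pole0_le z f L /\ polez_le z f K.

End Analytic.

From HB Require Import structures.
From mathcomp Require Import all_boot all_order all_algebra.
From mathcomp Require Import complex.
From mathcomp Require Import boolp classical_sets fsbigop reals.
From mathcomp Require Import zify ring lra.
Import Order.TTheory GRing.Theory Num.Theory.
Import Normc.
Local Open Scope ring_scope.
Local Open Scope complex_scope.
Set Implicit Arguments.
Unset Strict Implicit.
Unset Printing Implicit Defensive.

(* Truncation of Y_W and the finiteness of the grading make each series
   <alpha, Y^o(v,x) w> a Laurent series in x^-1 with finitely many positive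
   powers of x.  Conditions (b), (c), (d) are then rephrasings of each other:
   multiplying by x^l only shifts exponents, and such a series with no
   negative powers is a polynomial.
   For (a) -> (b), the two pole bounds combine into one denominator
   x^L (x - z)^K (its factors are coprime as z != 0).  Multiplying the series
   by that polynomial gives a series converging to a polynomial on |x| > |z|,
   and the difference is a Laurent series in x^-1 converging to 0 there, hence
   zero by the identity theorem for power series in y = 1/x.
   For (b) -> (a), dividing a series by x - c preserves absolute convergence on
   |x| > |c|: at y = 1/x it is division of a power series by 1 - c y. *)

Section SeriesTimesPoly.
Variable C : fieldType.
Implicit Types (q : {poly C}) (f : int -> C).

Definition vanish_above f (P : nat) := forall p : int, P%:Z < p -> f p = 0.

Definition coef_ser q : int -> C := fun p => if 0 <= p then q`_`|p| else 0.

Definition delta0 (p : int) : C := (p == 0)%:R.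

Lemma pmul_ser_widen q f p n : (size q <= n)%N ->
  pmul_ser q f p = \sum_(i < n) q`_i * f (p - i%:Z).
Proof.
move=> hn; rewrite /pmul_ser (big_ord_widen n (fun i => q`_i * f (p - i%:Z)) hn).
rewrite big_mkcond /=; apply: eq_bigr => i _; case: ifP => // /negbT.
by rewrite -leqNgt => /leq_sizeP ->; rewrite ?mul0r.
Qed.

Lemma pmul_ser0 f p : pmul_ser 0 f p = 0.
Proof. by rewrite /pmul_ser size_poly0 big_ord0. Qed.

Lemma pmul_serD q1 q2 f p :
  pmul_ser (q1 + q2) f p = pmul_ser q1 f p + pmul_ser q2 f p.
Proof.
set n := maxn (size q1) (size q2).
rewrite !(@pmul_ser_widen _ _ _ n) ?leq_maxl ?leq_maxr //; last first.
  exact: leq_trans (size_polyD _ _) _.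
by rewrite -big_split /=; apply: eq_bigr => i _; rewrite coefD mulrDl.
Qed.

Lemma pmul_serZ c q f p : pmul_ser (c *: q) f p = c * pmul_ser q f p.
Proof.
rewrite !(@pmul_ser_widen _ _ _ (size q)) ?size_scale_leq //.
by rewrite mulr_sumr; apply: eq_bigr => i _; rewrite coefZ mulrA.
Qed.

Lemma pmul_serC c f p : pmul_ser c%:P f p = c * f p.
Proof.
rewrite (@pmul_ser_widen _ _ _ 1) ?size_polyC ?leq_b1 // big_ord1 coefC /=.
by rewrite subr0.
Qed.

Lemma pmul_serMX q f p : pmul_ser (q * 'X) f p = pmul_ser q f (p - 1).
Proof.
rewrite (@pmul_ser_widen _ _ _ (size q).+1); last first.
  have [->|nz] := eqVneq q 0; first by rewrite mul0r size_poly0.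
  by rewrite size_mulX.
rewrite big_ord_recl coefMX /= mul0r add0r; apply: eq_bigr => i _.
rewrite coefMX /= /bump /=; congr (_ * f _); lia.
Qed.

Lemma pmul_serM q1 q2 f p :
  pmul_ser (q1 * q2) f p = pmul_ser q1 (pmul_ser q2 f) p.
Proof.
elim/poly_ind: q1 p => [|q c IH] p; first by rewrite mul0r !pmul_ser0.
rewrite mulrDl mulrAC pmul_serD pmul_serMX IH mul_polyC pmul_serZ.
by rewrite pmul_serD pmul_serMX pmul_serC.
Qed.

Lemma pmul_serXn n f p : pmul_ser 'X^n f p = f (p - n%:Z).
Proof.
elim: n p => [|n IH] p; first by rewrite expr0 -polyC1 pmul_serC mul1r subr0.
by rewrite exprSr pmul_serMX IH; congr f; lia.
Qed.

Lemma pmul_serXnM n q f p : pmul_ser ('X^n * q) f p = pmul_ser q f (p - n%:Z).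
Proof. by rewrite pmul_serM pmul_serXn. Qed.

Lemma pmul_serXsubC c f p : pmul_ser ('X - c%:P) f p = f (p - 1) - c * f p.
Proof. by rewrite -polyCN -['X]mul1r pmul_serD pmul_serMX -polyC1 !pmul_serC mul1r mulNr. Qed.

Lemma vanish_above_pmul_ser q f P :
  vanish_above f P -> vanish_above (pmul_ser q f) (P + size q).
Proof.
move=> hf p hp; rewrite /pmul_ser big1 // => i _; rewrite hf ?mulr0 //.
by have := ltn_ord i; lia.
Qed.

Lemma vanish_above_delta0 : vanish_above delta0 0.
Proof. by move=> p hp; rewrite /delta0; case: eqP => //; lia. Qed.

Lemma pmul_ser_delta0 q : pmul_ser q delta0 =1 coef_ser q.
Proof.
elim/poly_ind: q => [|q c IH] p; first by rewrite pmul_ser0 /coef_ser coef0 if_same.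
rewrite pmul_serD pmul_serMX IH pmul_serC /coef_ser /delta0 coefD coefMX coefC.
case: (ltrgt0P p) => [p_gt0|p_lt0|->] /=; last by rewrite mulr1 add0r.
  rewrite ifT ?ifN_eq ?mulr0 ?addr0; try lia.
  by congr (q`_ _); lia.
by rewrite !ifN ?mulr0 ?addr0 //; lia.
Qed.

End SeriesTimesPoly.

Arguments delta0 {C} p.
Arguments vanish_above_delta0 {C}.

Section RealNorm.
Variable R : realType.
Implicit Types x y : R[i].

Lemma normr_normc x : `|x| = (normc x)%:C. Proof. by []. Qed.

Lemma normc_ge0 x : 0 <= normc x.
Proof. by rewrite -ler0c -normr_normc normr_ge0. Qed.

Lemma normc_eq0 x : (normc x == 0) = (x == 0).
Proof. by rewrite -[RHS]normr_eq0 normr_normc -[0 : R[i]]/(0%:C) (inj_eq (@complexI R)). Qed.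

Lemma normc_gt0 x : (0 < normc x) = (x != 0).
Proof. by rewrite lt_def normc_eq0 normc_ge0 andbT. Qed.

Lemma normcX x n : normc (x ^+ n) = normc x ^+ n.
Proof. by apply: (@complexI R); rewrite rmorphXn /= -!normr_normc normrX. Qed.

Lemma normc_real (r : R) : normc r%:C = `|r|.
Proof. by apply: (@complexI R); rewrite -normr_normc normc_def /= expr0n addr0 sqrtr_sqr. Qed.

Lemma normcD x y : normc (x + y) <= normc x + normc y.
Proof. exact: (@le_normcD R x y). Qed.

Lemma normcB x y : normc x - normc y <= normc (x - y).
Proof. by have := normcD (x - y) y; rewrite subrK; lra. Qed.

Lemma normc_sum (I : Type) (r : seq I) (P : pred I) (F : I -> R[i]) :
  normc (\sum_(i <- r | P i) F i) <= \sum_(i <- r | P i) normc (F i).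
Proof.
elim/big_rec2: _ => [|i y1 y2 _ IH]; first by rewrite normc0.
by apply: le_trans (normcD _ _) _; rewrite lerD2l.
Qed.

Lemma ltc_normc x y : (`|x| < `|y|) = (normc x < normc y).
Proof. by rewrite !normr_normc ltcR. Qed.

Lemma expr_lt_eventually (t e : R) : 0 <= t -> t < 1 -> 0 < e ->
  exists n0, forall n, (n0 <= n)%N -> t ^+ n < e.
Proof.
move=> t_ge0 t_lt1 e_gt0; have [->|t_neq0] := eqVneq t 0.
  by exists 1%N => -[|n] // _; rewrite expr0n.
have t_gt0 : 0 < t by rewrite lt_def t_neq0.
set h := t^-1 - 1; have h_gt0 : 0 < h by rewrite subr_gt0 invf_gt1.
have bernoulli n : n%:R * h < (t^-1) ^+ n.
  elim: n => [|n IH]; first by rewrite mul0r exprn_gt0 ?invr_gt0.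
  rewrite exprS -natr1 mulrDl mul1r.
  have : 1 <= (t^-1) ^+ n by rewrite exprn_ege1 // invf_ge1 ?ltW.
  move: IH; have -> : t^-1 = 1 + h by rewrite /h addrC subrK.
  nra.
exists (Num.bound (e * h)^-1) => n hn.
have lt_n : (e * h)^-1 < n%:R.
  apply: lt_le_trans (archi_boundP _) _; last by rewrite ler_nat.
  by rewrite invr_ge0 ltW ?mulr_gt0.
rewrite -[t]invrK exprVn -[e]invrK ltf_pV2 ?posrE ?exprn_gt0 ?invr_gt0 //.
apply: lt_trans (bernoulli n).
by move: lt_n; rewrite -(ltr_pM2r h_gt0) invfM mulfVK ?gt_eqF.
Qed.

End RealNorm.

Section PowerSeries.
Variable R : realType.
Local Notation C := R[i].
Implicit Types (b : nat -> C) (c y s : C).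

Definition pser_sum b y n : C := \sum_(m < n) b m * y ^+ m.

Definition pser_abssum b y n : R := \sum_(m < n) normc (b m) * normc y ^+ m.

Definition pser_abs_conv_to b y s :=
  (exists B : R, forall n, pser_abssum b y n <= B) /\
  (forall e : R, 0 < e -> exists n0, forall n, (n0 <= n)%N ->
     normc (pser_sum b y n - s) < e).

Definition pser_mul1sub c b : nat -> C :=
  fun m => b m - (if m is m'.+1 then c * b m' else 0).

Lemma pser_abssum_ge0 b y n : 0 <= pser_abssum b y n.
Proof. by apply: sumr_ge0 => i _; rewrite mulr_ge0 ?exprn_ge0 ?normc_ge0. Qed.

Lemma pser_sumS b y n : pser_sum b y n.+1 = pser_sum b y n + b n * y ^+ n.
Proof. by rewrite /pser_sum big_ord_recr. Qed.

Lemma pser_abssumS b y n :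
  pser_abssum b y n.+1 = pser_abssum b y n + normc (b n) * normc y ^+ n.
Proof. by rewrite /pser_abssum big_ord_recr. Qed.

Lemma pser_abssum_le b y n n' :
  (n <= n')%N -> pser_abssum b y n <= pser_abssum b y n'.
Proof.
move/subnK => <-; elim: (n' - n)%N => [|k IH] //=.
rewrite addSn pser_abssumS; apply: le_trans IH _.
by rewrite lerDl mulr_ge0 ?exprn_ge0 ?normc_ge0.
Qed.

Lemma pser_sum_mul1sub c b y n :
  pser_sum (pser_mul1sub c b) y n.+1 = pser_sum b y n.+1 - c * y * pser_sum b y n.
Proof.
rewrite /pser_sum /pser_mul1sub; under eq_bigr do rewrite mulrBl; rewrite sumrB.
congr (_ - _); rewrite big_ord_recl /= mul0r add0r mulr_sumr.
by apply: eq_bigr => i _; rewrite exprS; ring.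
Qed.

Lemma pser_abssum_le_mul1sub c b y n :
  pser_abssum b y n.+1 <=
  pser_abssum (pser_mul1sub c b) y n.+1 + normc c * normc y * pser_abssum b y n.
Proof.
have -> : normc c * normc y * pser_abssum b y n = \sum_(m < n.+1)
    (if nat_of_ord m is m'.+1 then normc c * normc y * (normc (b m') * normc y ^+ m')
     else 0) by rewrite big_ord_recl /= add0r mulr_sumr.
rewrite /pser_abssum -big_split /=; apply: ler_sum => -[[|m] hm] _ /=.
  by rewrite /pser_mul1sub subr0 addr0.
rewrite /pser_mul1sub exprS.
have -> : normc c * normc y * (normc (b m) * normc y ^+ m) =
  normc (c * b m) * (normc y * normc y ^+ m) by rewrite normcM; ring.
rewrite -mulrDl ler_wpM2r ?mulr_ge0 ?exprn_ge0 ?normc_ge0 //.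
by apply: le_trans (normcD _ _); rewrite subrK.
Qed.

Lemma pser_abssum_bounded_div1sub c b y B : normc c * normc y < 1 ->
  (forall n, pser_abssum (pser_mul1sub c b) y n <= B) ->
  forall n, pser_abssum b y n <= B / (1 - normc c * normc y).
Proof.
move=> cy_lt1 hB n; set K := normc c * normc y.
have K_ge0 : 0 <= K by rewrite mulr_ge0 ?normc_ge0.
have B_ge0 : 0 <= B by apply: le_trans (hB 0%N); apply: pser_abssum_ge0.
rewrite ler_pdivlMr; last by rewrite subr_gt0.
case: n => [|n]; first by rewrite /pser_abssum big_ord0 mul0r.
have h1 := pser_abssum_le_mul1sub c b y n.
have h2 := pser_abssum_le b y (leqnSn n).
have h3 := hB n.+1.
have : K * pser_abssum b y n <= K * pser_abssum b y n.+1 by rewrite ler_wpM2l.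
rewrite -/K in h1 *; nra.
Qed.

Lemma pser_term_lt_eventually b y y' B : normc y < normc y' ->
  (forall n, pser_abssum b y' n <= B) ->
  forall e, 0 < e -> exists n0, forall n, (n0 <= n)%N -> normc (b n * y ^+ n) < e.
Proof.
move=> yy' hB e e_gt0.
have y'_gt0 : 0 < normc y' by apply: le_lt_trans yy'; apply: normc_ge0.
have B_ge0 : 0 <= B by apply: le_trans (hB 0%N); apply: pser_abssum_ge0.
set th := normc y / normc y'.
have th_ge0 : 0 <= th by rewrite divr_ge0 ?normc_ge0.
have th_lt1 : th < 1 by rewrite ltr_pdivrMr // mul1r.
have term_le n : normc (b n * y ^+ n) <= B * th ^+ n.
  rewrite normcM normcX -{1}[normc y](divfK (lt0r_neq0 y'_gt0)) -/th exprMn.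
  rewrite mulrCA mulrC ler_wpM2r ?exprn_ge0 ?normc_ge0 //.
  by apply: le_trans (hB n.+1); rewrite pser_abssumS lerDr pser_abssum_ge0.
have B1_gt0 : 0 < B + 1 by lra.
have [n0 hn0] := expr_lt_eventually th_ge0 th_lt1 (divr_gt0 e_gt0 B1_gt0).
exists n0 => n /hn0; rewrite ltr_pdivlMr // => th_lt.
apply: le_lt_trans (term_le n) _; apply: le_lt_trans th_lt.
by rewrite mulrC ler_wpM2l ?exprn_ge0 // lerDl.
Qed.

Lemma pser_abs_conv_to_div1sub c b y y' s :
  normc y < normc y' -> normc c * normc y' < 1 ->
  pser_abs_conv_to (pser_mul1sub c b) y s ->
  (exists B', forall n, pser_abssum (pser_mul1sub c b) y' n <= B') ->
  pser_abs_conv_to b y (s / (1 - c * y)).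
Proof.
move=> yy' cy'_lt1 [[B hB] hconv] [B' hB'].
set K := normc c * normc y; have K_ge0 : 0 <= K by rewrite mulr_ge0 ?normc_ge0.
have K_lt1 : K < 1 by apply: le_lt_trans cy'_lt1; rewrite ler_wpM2l ?normc_ge0 // ltW.
split; first by exists (B / (1 - K)); apply: pser_abssum_bounded_div1sub.
move=> e e_gt0; set d := 1 - K; have d_gt0 : 0 < d by rewrite subr_gt0.
set e1 := e * d / 2; have e1_gt0 : 0 < e1 by rewrite divr_gt0 ?mulr_gt0.
have [n1 hn1] := hconv _ e1_gt0.
have K1_gt0 : 0 < K + 1 by lra.
have [n2 hn2] := pser_term_lt_eventually yy' (pser_abssum_bounded_div1sub cy'_lt1 hB')
  (divr_gt0 e1_gt0 K1_gt0).
exists (maxn n1 n2).+1 => -[|n] //; rewrite ltnS geq_max => /andP[n1n n2n].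
have d_le : d <= normc (1 - c * y) by have := normcB 1 (c * y); rewrite normc1 normcM.
have cy_neq1 : 1 - c * y != 0 by rewrite -normc_gt0; apply: lt_le_trans d_le.
have -> : pser_sum b y n.+1 - s / (1 - c * y) =
  ((pser_sum (pser_mul1sub c b) y n.+1 - s) - c * y * (b n * y ^+ n)) / (1 - c * y).
  by rewrite pser_sum_mul1sub pser_sumS; field.
rewrite normcM normcV ltr_pdivrMr ?normc_gt0 //.
apply: le_lt_trans (normcD _ _) _; rewrite normcN normcM [normc (c * y)]normcM -/K.
have h1 := hn1 n.+1 (leqW n1n).
have := hn2 n n2n; rewrite ltr_pdivlMr // => h2.
have h3 : 0 <= normc (b n * y ^+ n) := normc_ge0 _.
have h4 : e * d <= e * normc (1 - c * y) by rewrite ler_wpM2l // ltW.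
have h5 : e1 + e1 = e * d by rewrite /e1; field.
nra.
Qed.

Lemma pser_abs_conv_to_tail b y : b 0%N = 0 -> y != 0 ->
  pser_abs_conv_to b y 0 -> pser_abs_conv_to (fun m => b m.+1) y 0.
Proof.
move=> b0 y_neq0 [[B hB] hconv].
have e_sum n : pser_sum b y n.+1 = y * pser_sum (fun m => b m.+1) y n.
  rewrite /pser_sum big_ord_recl b0 mul0r add0r mulr_sumr.
  by apply: eq_bigr => i _; rewrite exprS /=; ring.
have e_abssum n : pser_abssum b y n.+1 = normc y * pser_abssum (fun m => b m.+1) y n.
  rewrite /pser_abssum big_ord_recl b0 normc0 mul0r add0r mulr_sumr.
  by apply: eq_bigr => i _; rewrite exprS /=; ring.
have y_gt0 : 0 < normc y by rewrite normc_gt0.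
split.
  by exists (B / normc y) => n; rewrite ler_pdivlMr // mulrC -e_abssum.
move=> e e_gt0; have [n0 hn0] := hconv (e * normc y) (mulr_gt0 e_gt0 y_gt0).
exists n0 => n hn; have := hn0 n.+1 (leqW hn).
by rewrite !subr0 e_sum normcM mulrC ltr_pM2r.
Qed.

Lemma pser_sum_sub_coef0_le b y y0 n : y0 != 0 -> normc y <= normc y0 ->
  normc (pser_sum b y n.+1 - b 0%N) <= normc y / normc y0 * pser_abssum b y0 n.+1.
Proof.
move=> y0_neq0 yy0; have y0_gt0 : 0 < normc y0 by rewrite normc_gt0.
set th := normc y / normc y0.
have th_ge0 : 0 <= th by rewrite divr_ge0 ?normc_ge0.
have th_le1 : th <= 1 by rewrite ler_pdivrMr // mul1r.
rewrite /pser_sum big_ord_recl expr0 mulr1 addrC addKr.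
apply: le_trans (normc_sum _ _ _) _.
apply: le_trans (_ : th * \sum_(i < n) normc (b i.+1) * normc y0 ^+ i.+1 <= _); last first.
  rewrite ler_wpM2l // /pser_abssum big_ord_recl lerDr.
  by rewrite mulr_ge0 ?exprn_ge0 ?normc_ge0.
rewrite mulr_sumr; apply: ler_sum => i _; rewrite /bump /= normcM normcX mulrCA.
apply: ler_wpM2l; first exact: normc_ge0.
rewrite -{1}[normc y](divfK (lt0r_neq0 y0_gt0)) -/th exprMn exprS.
rewrite ler_wpM2r ?mulr_ge0 ?exprn_ge0 ?normc_ge0 //.
by rewrite /bump /= exprS ler_piMr ?exprn_ile1.
Qed.

Lemma pser_coef0_eq0 b (r : R) : 0 < r ->
  (forall y, 0 < normc y -> normc y < r -> pser_abs_conv_to b y 0) -> b 0%N = 0.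
Proof.
move=> r_gt0 hconv; apply/eqP; rewrite -normc_eq0; apply/negP => /negP b0_neq0.
set b0 := normc (b 0%N); have b0_gt0 : 0 < b0 by rewrite lt_def b0_neq0 normc_ge0.
have real_norm (t : R) : 0 <= t -> normc t%:C = t by move=> ?; rewrite normc_real ger0_norm.
set y0 : C := (r / 2)%:C.
have ny0 : normc y0 = r / 2 by rewrite real_norm ?divr_ge0 ?ltW.
have [[B hB] _] : pser_abs_conv_to b y0 0 by apply: hconv; rewrite ny0; lra.
have b0_le : b0 <= B.
  apply: le_trans (hB 1%N); rewrite /pser_abssum big_ord1 expr0 mulr1 //.
set t := b0 / (2 * (B + 1)).
have t_gt0 : 0 < t by rewrite divr_gt0 //; lra.
have tB : t * B < b0 / 2.
  rewrite /t mulrAC ltr_pdivrMr ?mulr_gt0 //; try lra; nra.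
have t_le1 : t <= 1 by rewrite ler_pdivrMr ?mul1r; lra.
set y : C := (t * (r / 2))%:C.
have ny : normc y = t * (r / 2) by rewrite real_norm //; nra.
have [_ hy] : pser_abs_conv_to b y 0 by apply: hconv; rewrite ny; nra.
have [n0 hn0] := hy (b0 / 2) (divr_gt0 b0_gt0 (ltr0n _ 2)).
have h1 := hn0 n0.+1 (leqnSn _); rewrite subr0 in h1.
have y0_neq0 : y0 != 0 by rewrite -normc_gt0 ny0; lra.
have yy0 : normc y <= normc y0 by rewrite ny ny0; nra.
have ratio : normc y / normc y0 = t by rewrite ny ny0 mulfK // gt_eqF //; lra.
have h2 := pser_sum_sub_coef0_le b n0 y0_neq0 yy0; rewrite ratio in h2.
have h3 : t * pser_abssum b y0 n0.+1 <= t * B by rewrite ler_wpM2l ?(ltW t_gt0).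
have := normcD (pser_sum b y n0.+1) (b 0%N - pser_sum b y n0.+1).
rewrite addrC subrK -[b 0%N - _]opprB normcN -/b0; lra.
Qed.

Lemma pser_coef_eq0 b (r : R) : 0 < r ->
  (forall y, 0 < normc y -> normc y < r -> pser_abs_conv_to b y 0) -> forall m, b m = 0.
Proof.
move=> r_gt0 + m; elim: m b => [|m IH] b hconv; first exact: pser_coef0_eq0 hconv.
apply: (IH (fun m => b m.+1)) => y y_gt0 y_lt.
apply: pser_abs_conv_to_tail; last exact: hconv.
  exact: pser_coef0_eq0 hconv.
by rewrite -normc_gt0.
Qed.

End PowerSeries.

Section LaurentSeries.
Variable R : realType.
Local Notation C := R[i].
Implicit Types (a : int -> C) (x s : C).

Lemma symsumS (g : int -> C) N :
  symsum g N.+1 = symsum g N + g N.+1%:Z + g (- N.+1%:Z).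
Proof.
rewrite /symsum.
have -> : (N.+1 + N.+1).+1 = ((N + N).+1).+2 by lia.
rewrite big_ord_recl big_ord_recr /= [RHS]addrC; congr (_ + (_ + _)).
- by congr g; lia.
- by apply: eq_bigr => i _; congr g; rewrite /bump /=; lia.
- by congr g; rewrite /bump /=; lia.
Qed.

Lemma symsum_vanish_above (g : int -> C) (P N : nat) :
  vanish_above g P -> (P <= N)%N ->
  symsum g N = \sum_(m < (N + P).+1) g (P%:Z - m%:Z).
Proof.
move=> hg /subnK <-; elim: (N - P)%N => [|k IH] /=.
  rewrite add0n /symsum (reindex_inj rev_ord_inj) /=.
  by apply: eq_bigr => i _; congr g; have := ltn_ord i; lia.
rewrite addSn symsumS IH hg; last by lia.
by rewrite addr0 [in RHS]big_ord_recr /=; congr (_ + g _); lia.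
Qed.

Lemma symsum_le (g : int -> C) N N' : (forall p, 0 <= g p) -> (N <= N')%N ->
  symsum g N <= symsum g N'.
Proof.
move=> hg /subnK <-; elim: (N' - N)%N => [|k IH] //=.
by rewrite addSn symsumS; apply: le_trans IH _; rewrite -addrA lerDl addr_ge0.
Qed.

Section ReflectAtInfinity.
Variables (a : int -> C) (P : nat) (x : C).
Hypotheses (a_vanish : vanish_above a P) (x_neq0 : x != 0).
Let b := fun m : nat => a (P%:Z - m%:Z).

Lemma exprz_subn (m : nat) : x ^ (P%:Z - m%:Z) = x ^+ P * x^-1 ^+ m.
Proof. by rewrite expfzDr // -exprz_inv. Qed.

Lemma symsum_pser_sum N : (P <= N)%N ->
  symsum (fun p => a p * x ^ p) N = x ^+ P * pser_sum b x^-1 (N + P).+1.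
Proof.
move=> PN; rewrite (@symsum_vanish_above _ P) //; last first.
  by move=> p hp; rewrite a_vanish ?mul0r.
by rewrite /pser_sum mulr_sumr; apply: eq_bigr => i _; rewrite exprz_subn /b; ring.
Qed.

Lemma symsum_pser_abssum N : (P <= N)%N ->
  symsum (fun p => `|a p * x ^ p|) N = (normc x ^+ P * pser_abssum b x^-1 (N + P).+1)%:C.
Proof.
move=> PN; rewrite (@symsum_vanish_above _ P) //; last first.
  by move=> p hp; rewrite a_vanish ?mul0r ?normr0.
rewrite /pser_abssum mulr_sumr rmorph_sum; apply: eq_bigr => i _.
rewrite exprz_subn normr_normc !normcM !normcX /b; congr (_%:C); ring.
Qed.

Lemma normcX_gt0 : 0 < normc x ^+ P.
Proof. by rewrite exprn_gt0 // normc_gt0. Qed.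

Lemma abs_conv_to_pser s :
  abs_conv_to a x s <-> pser_abs_conv_to b x^-1 (s / x ^+ P).
Proof.
have xP_neq0 : x ^+ P != 0 by rewrite expf_neq0.
have errE n : x ^+ P * pser_sum b x^-1 n - s = x ^+ P * (pser_sum b x^-1 n - s / x ^+ P).
  by rewrite mulrBr mulrCA mulfV ?mulr1.
split=> -[[B hB] hconv].
  split.
- exists (complex.Re B / normc x ^+ P) => n; rewrite ler_pdivlMr ?normcX_gt0 //.
  have := hB (n + P)%N; rewrite symsum_pser_abssum ?leq_addl // lecE /= => /andP[_].
  apply: le_trans; rewrite mulrC ler_wpM2l ?(ltW normcX_gt0) //.
  by apply: pser_abssum_le; lia.
- move=> e e_gt0.
  have eP_gt0 : 0 < (e * normc x ^+ P)%:C by rewrite ltcR mulr_gt0 ?normcX_gt0.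
  have [n0 hn0] := hconv _ eP_gt0.
  exists (n0 + P + P).+1 => n hn.
  have := hn0 (n - P).-1 ltac:(lia); rewrite symsum_pser_sum; last by lia.
  have -> : ((n - P).-1 + P).+1 = n by lia.
  by rewrite errE normr_normc ltcR normcM normcX mulrC ltr_pM2r ?normcX_gt0.
split.
- exists (normc x ^+ P * B)%:C => N.
  apply: le_trans (symsum_le _ (leq_maxl N P)) _; first by move=> p; exact: normr_ge0.
  by rewrite symsum_pser_abssum ?leq_maxr // lecR ler_wpM2l ?(ltW normcX_gt0).
- move=> e e_gt0; have e_real : e \is Num.real by apply: gtr0_real.
  rewrite -(RRe_real e_real) ltcR in e_gt0 *.
  have [n0 hn0] := hconv _ (divr_gt0 e_gt0 normcX_gt0).
  exists (maxn P n0) => N; rewrite geq_max => /andP[PN n0N].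
  rewrite symsum_pser_sum // errE normr_normc ltcR normcM normcX mulrC -ltr_pdivlMr.
    by apply: hn0; lia.
  exact: normcX_gt0.
Qed.

End ReflectAtInfinity.

End LaurentSeries.

Section LaurentConvergence.
Variable R : realType.
Local Notation C := R[i].
Implicit Types (a : int -> C) (x s : C).

Lemma abs_conv_toD a1 a2 x s1 s2 :
  abs_conv_to a1 x s1 -> abs_conv_to a2 x s2 ->
  abs_conv_to (fun p => a1 p + a2 p) x (s1 + s2).
Proof.
move=> [[B1 hB1] hconv1] [[B2 hB2] hconv2]; split.
  exists (B1 + B2) => N; apply: le_trans (lerD (hB1 N) (hB2 N)).
  by rewrite /symsum -big_split /=; apply: ler_sum => i _; rewrite mulrDl ler_normD.
move=> e e_gt0; have e2_gt0 : 0 < e / 2%:R by rewrite divr_gt0.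
have [n1 hn1] := hconv1 _ e2_gt0; have [n2 hn2] := hconv2 _ e2_gt0.
exists (maxn n1 n2) => N; rewrite geq_max => /andP[n1N n2N].
have -> : symsum (fun p => (a1 p + a2 p) * x ^ p) N - (s1 + s2) =
  (symsum (fun p => a1 p * x ^ p) N - s1) + (symsum (fun p => a2 p * x ^ p) N - s2).
  rewrite /symsum addrACA -opprD -big_split /=; congr (_ - _).
  by apply: eq_bigr => i _; rewrite mulrDl.
by apply: le_lt_trans (ler_normD _ _) _; rewrite [e]splitr ltrD ?hn1 ?hn2.
Qed.

Lemma abs_conv_toZ k a x s :
  abs_conv_to a x s -> abs_conv_to (fun p => k * a p) x (k * s).
Proof.
move=> [[B hB] hconv]; split.
  exists (`|k| * B) => N; apply: le_trans (ler_wpM2l (normr_ge0 k) (hB N)).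
  by rewrite /symsum mulr_sumr; apply: ler_sum => i _; rewrite -mulrA normrM.
have symsumZ N : symsum (fun p => k * a p * x ^ p) N = k * symsum (fun p => a p * x ^ p) N.
  by rewrite /symsum mulr_sumr; apply: eq_bigr => i _; rewrite mulrA.
move=> e e_gt0; have [k0|k_neq0] := eqVneq k 0.
  by exists 0%N => N _; rewrite symsumZ -mulrBr k0 mul0r normr0.
have k_gt0 : 0 < `|k| by rewrite normr_gt0.
have [n0 hn0] := hconv _ (divr_gt0 e_gt0 k_gt0).
by exists n0 => N hN; rewrite symsumZ -mulrBr normrM mulrC -ltr_pdivlMr // hn0.
Qed.

Lemma abs_conv_to_shift a P x s : vanish_above a P -> x != 0 ->
  abs_conv_to a x s -> abs_conv_to (fun p => a (p - 1)) x (x * s).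
Proof.
move=> a_vanish x_neq0 /(abs_conv_to_pser a_vanish x_neq0) hconv.
apply/(@abs_conv_to_pser _ _ P.+1) => //; first by move=> p hp; apply: a_vanish; lia.
suff -> : (fun m : nat => a (P.+1%:Z - m%:Z - 1)) = (fun m : nat => a (P%:Z - m%:Z)).
  by rewrite exprS invfM mulrACA mulfV // mul1r.
by apply: funext => m; congr a; lia.
Qed.

Lemma abs_conv_to_pmul_ser q a P x s : vanish_above a P -> x != 0 ->
  abs_conv_to a x s -> abs_conv_to (pmul_ser q a) x (q.[x] * s).
Proof.
elim/poly_ind: q a P s => [|q c IH] a P s a_vanish x_neq0 hconv.
  have := abs_conv_toZ 0 hconv; rewrite horner0 !mul0r.
  by congr abs_conv_to; apply: funext => p; rewrite pmul_ser0 mul0r.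
have -> : pmul_ser (q * 'X + c%:P) a = fun p => pmul_ser q (fun p => a (p - 1)) p + c * a p.
  apply: funext => p; rewrite pmul_serD pmul_serMX pmul_serC; congr (_ + _).
  by apply: eq_bigr => i _; congr (_ * a _); lia.
rewrite hornerD hornerMX hornerC mulrDl -mulrA.
apply: abs_conv_toD; last exact: abs_conv_toZ.
apply: (IH _ P.+1) => //; first by move=> p hp; apply: a_vanish; lia.
exact: abs_conv_to_shift a_vanish x_neq0 hconv.
Qed.

(* pser_abs_conv_to_div1sub also needs an absolute bound at a point x' with
   rho < |x'| < |x|. *)
Lemma abs_conv_to_divXsubC c a P (rho : R) (S : C -> C) :
  vanish_above a P -> 0 < rho -> normc c <= rho ->
  (forall x, rho < normc x -> abs_conv_to (pmul_ser ('X - c%:P) a) x (S x)) ->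
  forall x, rho < normc x -> abs_conv_to a x (S x / (x - c)).
Proof.
move=> a_vanish rho_gt0 c_le hS x hx.
have normc_neq0 x1 : rho < normc x1 -> x1 != 0.
  by move=> h1; rewrite -normc_gt0; apply: lt_trans h1.
set T := pmul_ser ('X - c%:P) a.
have T_vanish : vanish_above T P.+1.
  by move=> p hp; rewrite /T pmul_serXsubC !a_vanish ?mulr0 ?subr0 //; lia.
have TE : (fun m : nat => T (P.+1%:Z - m%:Z)) = pser_mul1sub c (fun m => a (P%:Z - m%:Z)).
  apply: funext => -[|m]; rewrite /T pmul_serXsubC /pser_mul1sub /=.
    by rewrite [a (P.+1%:Z - 0%:Z)]a_vanish ?mulr0; [congr (a _ - _); lia | lia].
  by congr (a _ - c * a _); lia.
set x' : C := ((normc x + rho) / 2)%:C.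
have nx' : normc x' = (normc x + rho) / 2.
  by rewrite normc_real ger0_norm // divr_ge0 // addr_ge0 ?normc_ge0 ?ltW.
have hx' : rho < normc x' by rewrite nx'; lra.
have /(abs_conv_to_pser T_vanish (normc_neq0 _ hx)) := hS x hx.
have /(abs_conv_to_pser T_vanish (normc_neq0 _ hx')) := hS x' hx'.
rewrite TE => -[bound' _] conv.
apply/(abs_conv_to_pser a_vanish (normc_neq0 _ hx) (S x / (x - c))).
have lt_inv : normc x^-1 < normc x'^-1.
  by rewrite !normcV ltf_pV2 ?posrE ?normc_gt0 ?normc_neq0 //; lra.
have c_lt : normc c * normc x'^-1 < 1.
  by rewrite normcV ltr_pdivrMr ?normc_gt0 ?normc_neq0 // mul1r; apply: le_lt_trans hx'.
have := pser_abs_conv_to_div1sub lt_inv c_lt conv bound'.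
have xc_neq0 : x - c != 0 by rewrite subr_eq0; apply: contraTneq hx => ->; lra.
suff -> : S x / x ^+ P.+1 / (1 - c * x^-1) = S x / (x - c) / x ^+ P by [].
have x_neq0 := normc_neq0 _ hx.
have -> : 1 - c * x^-1 = (x - c) / x by field.
by rewrite exprS; field; rewrite xc_neq0 x_neq0 expf_neq0.
Qed.

Lemma abs_conv_to_divXsubCn c n a P (rho : R) (S : C -> C) :
  vanish_above a P -> 0 < rho -> normc c <= rho ->
  (forall x, rho < normc x -> abs_conv_to (pmul_ser (('X - c%:P) ^+ n) a) x (S x)) ->
  forall x, rho < normc x -> abs_conv_to a x (S x / (x - c) ^+ n).
Proof.
elim: n a P S => [|n IH] a P S a_vanish rho_gt0 c_le hS x hx.
  rewrite expr0 divr1; have := hS x hx; congr abs_conv_to.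
  by apply: funext => p; rewrite expr0 -polyC1 pmul_serC mul1r.
rewrite exprSr invfM mulrA.
apply: (@abs_conv_to_divXsubC c a P rho (fun x => S x / (x - c) ^+ n)) => // x1 hx1.
apply: (IH _ _ S (vanish_above_pmul_ser (q := 'X - c%:P) a_vanish)) => // x2 hx2.
by have := hS x2 hx2; congr abs_conv_to; apply: funext => p; rewrite exprSr pmul_serM.
Qed.

Lemma abs_conv_to_eq0 d P (rho : R) : vanish_above d P -> 0 < rho ->
  (forall x, rho < normc x -> abs_conv_to d x 0) -> forall p, d p = 0.
Proof.
move=> d_vanish rho_gt0 hconv p; have [/d_vanish //|p_le] := ltP P%:Z p.
have -> : p = P%:Z - (`|P%:Z - p|%N)%:Z by lia.
apply: (@pser_coef_eq0 _ (fun m => d (P%:Z - m%:Z)) rho^-1); first by rewrite invr_gt0.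
move=> y y_gt0 y_lt; have y_neq0 : y != 0 by rewrite -normc_gt0.
have hy : rho < normc y^-1 by rewrite normcV -[rho]invrK ltf_pV2 ?posrE ?invr_gt0.
have /(abs_conv_to_pser d_vanish) := hconv _ hy.
by rewrite invrK mul0r; apply; rewrite invr_eq0.
Qed.

Lemma abs_conv_to_delta0 x : x != 0 -> abs_conv_to delta0 x 1.
Proof.
move=> x_neq0; apply/(abs_conv_to_pser (@vanish_above_delta0 _) x_neq0 1).
rewrite expr0 divr1.
have bE : (fun m : nat => delta0 (0%:Z - m%:Z)) = fun m : nat => (m == 0)%:R :> C.
  by apply: funext => m; rewrite /delta0; congr (_%:R); lia.
rewrite bE; split.
  exists 1 => -[|n]; first by rewrite /pser_abssum big_ord0.
  rewrite /pser_abssum big_ord_recl big1 => [|i _]; last by rewrite normc0 mul0r.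
  by rewrite normc1 expr0 !mulr1 addr0.
move=> e e_gt0; exists 1%N => -[|n] // _.
rewrite /pser_sum big_ord_recl big1 => [|i _]; last by rewrite mul0r.
by rewrite mul1r expr0 addr0 subrr normc0.
Qed.

End LaurentConvergence.

Section RationalFunctions.
Variable R : realType.
Local Notation C := R[i].

Lemma poly_eq0_roots_outside (q : {poly C}) (rho : R) :
  (forall x, rho < normc x -> q.[x] = 0) -> q = 0.
Proof.
move=> hq; apply/eqP; apply: contraT => q_neq0.
set rs := [seq ((`|rho| + 1 + i%:R)%:C : C) | i <- iota 0 (size q)].
have /(_ rs) := max_poly_roots q_neq0; rewrite size_map size_iota ltnn; apply.
  apply/allP => x /mapP [i _ ->]; apply/rootP; apply: hq.
  rewrite normc_real ger0_norm; last by rewrite addr_ge0 ?ler0n // addr_ge0.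
  by have := ler_norm rho; have := ler0n R i; lra.
rewrite map_inj_uniq ?iota_uniq // => i j /(@complexI R) /addrI /eqP.
by rewrite eqr_nat => /eqP.
Qed.

Lemma pole_orders_common_denom z (f : C -> C) (L K : nat) : z != 0 ->
  pole0_le z f L -> polez_le z f K ->
  exists g : {poly C}, forall x, x != 0 -> x != z ->
    f x = g.[x] / (x ^+ L * (x - z) ^+ K).
Proof.
move=> z_neq0 [q1 [b e1]] [q2 [a e2]].
have den_neq0 x n m : x != 0 -> x != z -> x ^+ n * (x - z) ^+ m != 0.
  by move=> x_neq0 x_neq_z; rewrite mulf_neq0 ?expf_neq0 ?subr_eq0.
have [b_le|K_lt] := leqP b K.
  exists (q1 * ('X - z%:P) ^+ (K - b)) => x x_neq0 x_neq_z.
  have xz_neq0 : x - z != 0 by rewrite subr_eq0.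
  rewrite e1 // hornerM horner_exp hornerXsubC -{2}(subnK b_le) exprD.
  by field; rewrite !expf_neq0.
(* Otherwise (X - z)^(b - K) divides q1 X^a, and is coprime to X^a as z != 0. *)
set e := (b - K)%N; have bE : b = (K + e)%N by rewrite /e; lia.
have q12 : q1 * 'X ^+ a * ('X - z%:P) ^+ K = q2 * 'X ^+ L * ('X - z%:P) ^+ b.
  apply/eqP; rewrite -subr_eq0; apply/eqP.
  apply: (@poly_eq0_roots_outside _ (normc z)) => x hx.
  have x_neq0 : x != 0 by rewrite -normc_gt0; apply: le_lt_trans hx; apply: normc_ge0.
  have x_neq_z : x != z by apply: contraTneq hx => ->; rewrite ltxx.
  have hq1 : q1.[x] = f x * (x ^+ L * (x - z) ^+ b) by rewrite e1 // divfK ?den_neq0.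
  have hq2 : q2.[x] = f x * (x ^+ a * (x - z) ^+ K) by rewrite e2 // divfK ?den_neq0.
  by rewrite !(hornerE, hornerXn, hornerXsubC) hq1 hq2; ring.
have XzK_neq0 : ('X - z%:P) ^+ K != 0 :> {poly C} by rewrite expf_neq0 // polyXsubC_eq0.
have q1_dvd : ('X - z%:P) ^+ e %| q1.
  have coprime : coprimep (('X - z%:P) ^+ e) ('X ^+ a).
    apply/coprimep_expl/coprimep_expr; rewrite coprimep_sym coprimep_XsubC.
    by rewrite rootX.
  rewrite -(Gauss_dvdpl _ coprime).
  have -> : q1 * 'X ^+ a = q2 * 'X ^+ L * ('X - z%:P) ^+ e.
    by apply: (mulIf XzK_neq0); rewrite q12 bE exprD; ring.
  exact: dvdp_mull.
exists (q1 %/ ('X - z%:P) ^+ e) => x x_neq0 x_neq_z.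
have xz_neq0 : x - z != 0 by rewrite subr_eq0.
rewrite e1 // -{1}(divpK q1_dvd) hornerM horner_exp hornerXsubC bE exprD.
by field; rewrite !expf_neq0.
Qed.

End RationalFunctions.

Section VertexOperators.
Variable C : numFieldType.

Lemma addr_self_eq0 (M : zmodType) (x : M) : x + x = x -> x = 0.
Proof. by rewrite -[RHS]addr0 => /addrI. Qed.

Section Bilinear.
Variables (V M : lmodType C) (Y : vop V M).
Hypothesis Y_bilinear : bilinear_vop Y.

Lemma vopDr u n w1 w2 : Y u n (w1 + w2) = Y u n w1 + Y u n w2.
Proof. by have [_ h] := Y_bilinear n; rewrite -[w1]scale1r h !scale1r. Qed.

Lemma vop0r u n : Y u n 0 = 0.
Proof. by apply: addr_self_eq0; rewrite -vopDr addr0. Qed.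

Lemma vopZr u n a w : Y u n (a *: w) = a *: Y u n w.
Proof. by have [_ h] := Y_bilinear n; rewrite -[a *: w]addr0 h vop0r addr0. Qed.

Lemma vop_sumr u n (I : Type) (r : seq I) (F : I -> M) :
  Y u n (\sum_(i <- r) F i) = \sum_(i <- r) Y u n (F i).
Proof. exact: (big_morph _ (vopDr u n) (vop0r u n)). Qed.

Lemma vop0l n w : Y 0 n w = 0.
Proof.
have [h _] := Y_bilinear n; apply: addr_self_eq0.
by have := h 1 0 0 w; rewrite !scale1r addr0.
Qed.

End Bilinear.

Definition symrange (N : nat) : seq int := [seq i%:Z - N%:Z | i <- iota 0 (N + N).+1].

Lemma symrange_uniq N : uniq (symrange N).
Proof. by rewrite map_inj_uniq ?iota_uniq // => i j /addIr []. Qed.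

Lemma mem_symrange N (n : int) : (n \in symrange N) = (`|n| <= N)%N.
Proof.
apply/mapP/idP => [ [i i_in ->] | n_le]; first by move: i_in; rewrite mem_iota; lia.
by exists (absz (n + N%:Z)); [rewrite mem_iota; lia | lia].
Qed.

Lemma fsbigT_seq (M : nmodType) (T : choiceType) (r : seq T) (f : T -> M) :
  uniq r -> (forall i, i \notin r -> f i = 0) ->
  \sum_(i \in [set: T]) f i = \sum_(i <- r) f i.
Proof.
move=> r_uniq f_out; rewrite (fsbigE r) //; last by move=> i _; apply: f_out.
by apply: eq_bigl => i; rewrite in_setT.
Qed.

Definition vanish_below (M : zmodType) (f : int -> M) :=
  exists K : int, forall k, k <= K -> f k = 0.

Lemma vanish_below_sum (M : zmodType) (I : Type) (r : seq I) (F : I -> int -> M) :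
  (forall i, vanish_below (F i)) -> vanish_below (fun k => \sum_(i <- r) F i k).
Proof.
move=> hF; elim: r => [|i r [K IH]]; first by exists 0 => k _; rewrite big_nil.
have [Ki hKi] := hF i; exists (Num.min K Ki) => k; rewrite le_min => /andP[kK kKi].
by rewrite big_cons hKi // IH // add0r.
Qed.

Section Grading.
Variables (V : lmodType C) (Y : vop V V) (om : V) (pi : int -> V -> V).
Hypotheses (Y_bilinear : bilinear_vop Y) (pi_grading : is_grading (Y om 1) pi).

Lemma piD n v1 v2 : pi n (v1 + v2) = pi n v1 + pi n v2.
Proof. by case: pi_grading => h _ _ _; rewrite -[v1]scale1r h !scale1r. Qed.

Lemma pi0 n : pi n 0 = 0.
Proof. by apply: addr_self_eq0; rewrite -piD addr0. Qed.

Lemma piZ n a v : pi n (a *: v) = a *: pi n v.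
Proof. by case: pi_grading => h _ _ _; rewrite -[a *: v]addr0 h pi0 addr0. Qed.

Lemma pi_sum n (I : Type) (r : seq I) (F : I -> V) :
  pi n (\sum_(i <- r) F i) = \sum_(i <- r) pi n (F i).
Proof. exact: (big_morph _ (piD n) (pi0 n)). Qed.

Lemma pi_pi m n v : pi m (pi n v) = if m == n then pi n v else 0.
Proof. by case: pi_grading => _ h _ _. Qed.

Lemma L0_pi n v : Y om 1 (pi n v) = n%:~R *: pi n v.
Proof. by case: pi_grading => _ _ _ h. Qed.

Lemma pi_support v : exists N : nat, forall n, n \notin symrange N -> pi n v = 0.
Proof.
case: pi_grading => _ _ h _; have [N [hN _]] := h v.
by exists N => n; rewrite mem_symrange -ltnNge; apply: hN.
Qed.

Lemma pi_decomp v (r : seq int) : uniq r ->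
  (forall n, n \notin r -> pi n v = 0) -> v = \sum_(n <- r) pi n v.
Proof.
move=> r_uniq hr; case: pi_grading => _ _ h _; have [N [_ vE]] := h v.
by rewrite {1}vE; apply: fsbigT_seq.
Qed.

Lemma pi_L0 m v : pi m (Y om 1 v) = m%:~R *: pi m v.
Proof.
have [N hN] := pi_support v; set r := undup (m :: symrange N).
have hr n : n \notin r -> pi n v = 0.
  by rewrite mem_undup in_cons negb_or => /andP[_]; apply: hN.
rewrite {1}(pi_decomp (undup_uniq _) hr) vop_sumr // pi_sum.
rewrite (bigD1_seq m) ?mem_undup ?mem_head ?undup_uniq //= big1_seq ?addr0.
  by rewrite L0_pi piZ pi_pi eqxx.
by move=> n /andP[n_neq_m _]; rewrite L0_pi piZ pi_pi eq_sym (negbTE n_neq_m) scaler0.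
Qed.

Lemma L0_eigenvector_pi (l : int) v : Y om 1 v = l%:~R *: v -> v = pi l v.
Proof.
move=> eigen; rewrite {1}(@pi_decomp v [:: l]) ?big_seq1 // => m.
rewrite mem_seq1 => m_neq_l; have := pi_L0 m v; rewrite eigen piZ.
move/eqP; rewrite -subr_eq0 -scalerBl scaler_eq0 -rmorphB intr_eq0 subr_eq0.
by rewrite eq_sym (negbTE m_neq_l) => /eqP.
Qed.

End Grading.

Section VOAWeights.
Variables (V : lmodType C) (Y : vop V V) (vac om : V) (pi : int -> V -> V).
Hypothesis V_VOA : is_VOA Y vac om pi.

(* L(1) = om_2 lowers the weight by one: [L(0), L(1)] = -L(1). *)
Lemma L1_pi n u : Y om 2 (pi n u) = pi (n - 1) (Y om 2 (pi n u)).
Proof.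
case: V_VOA => [[Y_bilinear _] _ _ [[c vir] _] [[grading _] _ _]].
apply: (L0_eigenvector_pi Y_bilinear grading).
have := vir 0 1 (pi n u); rewrite !add0r scale0r addr0 (L0_pi grading) vopZr //.
by move/(canRL (subrK _)) => ->; rewrite -scalerDl addrC rmorphB.
Qed.

Lemma iter_L1_pi j n u :
  iter j (Y om 2) (pi n u) = pi (n - j%:Z) (iter j (Y om 2) (pi n u)).
Proof.
case: V_VOA => [[Y_bilinear _] _ _ _ [[grading _] _ _]].
elim: j => [|j IH] /=; first by rewrite subr0 (pi_pi grading) eqxx.
by rewrite IH {1}L1_pi; congr (pi _ _); lia.
Qed.

Lemma iter_vop0r j : iter j (Y om 2) 0 = 0.
Proof.
case: V_VOA => [[Y_bilinear _] _ _ _ _].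
by elim: j => [|j IH] //=; rewrite IH vop0r.
Qed.

(* Only finitely many weights n occur in v, and L(1)^j kills each of them once
   n - j drops below the lowest weight, so Y^o(v, x) w is a finite sum of
   truncated series. *)
Lemma Yo_coef_vanish_below (W : lmodType C) (YW : vop V W) :
  is_weak_module Y vac YW -> forall v w, vanish_below (fun k => Yo_coef Y om pi YW v k w).
Proof.
case: V_VOA => [[Y_bilinear _] _ _ _ [[grading _] _ [N0 low]]].
case=> YW_bilinear YW_trunc _ _ v w.
have [N hN] := pi_support grading v.
set J := (`|N%:Z - N0|%N).+1.
pose term n j k := ((-1) ^ n / (j`!)%:R) *:
  YW (iter j (Y om 2) (pi n v)) (2 * n - k - 2 - j%:Z) w.
have term_n n j k : n \notin symrange N -> term n j k = 0.
  by move=> /hN n_out; rewrite /term n_out iter_vop0r vop0l // scaler0.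
have term_j n j k : n \in symrange N -> (J <= j)%N -> term n j k = 0.
  rewrite mem_symrange => n_le j_ge; rewrite /term iter_L1_pi low ?vop0l ?scaler0 //.
  by rewrite /J in j_ge; lia.
have YoE k : Yo_coef Y om pi YW v k w =
    \sum_(n <- symrange N) \sum_(j <- iota 0 J) term n j k.
  rewrite /Yo_coef (fsbigT_seq (symrange_uniq N)) => [|n n_out]; last first.
    by rewrite fsbig1 // => j _; apply: term_n.
  apply: eq_big_seq => n n_in; apply: fsbigT_seq (iota_uniq 0 J) _ => j.
  by rewrite mem_iota add0n /= => j_ge; apply: term_j; rewrite // leqNgt.
have [K hK] : vanish_below (fun k => \sum_(n <- symrange N) \sum_(j <- iota 0 J) term n j k).
  apply: vanish_below_sum => n; apply: vanish_below_sum => j.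
  have [M hM] := YW_trunc (iter j (Y om 2) (pi n v)) w.
  by exists (2 * n - 2 - j%:Z - M) => k k_le; rewrite /term hM ?scaler0 //; lia.
by exists K => k k_le; rewrite YoE hK.
Qed.

End VOAWeights.

End VertexOperators.

Section RationalLaurentSeries.
Variable R : realType.
Local Notation C := R[i].
Variables (z : C) (a : int -> C) (P : nat).
Hypotheses (z_neq0 : z != 0) (a_vanish : vanish_above a P).

Lemma normc_z_gt0 : 0 < normc z. Proof. by rewrite normc_gt0. Qed.

Lemma normc_gt_neq0 x : normc z < normc x -> x != 0.
Proof. by rewrite -normc_gt0; apply: le_lt_trans; apply: normc_ge0. Qed.

Lemma abs_conv_to_coef_ser (r : {poly C}) x : x != 0 -> abs_conv_to (coef_ser r) x r.[x].
Proof.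
move=> x_neq0; have := abs_conv_to_pmul_ser r vanish_above_delta0 x_neq0 (abs_conv_to_delta0 x_neq0).
by rewrite mulr1; congr abs_conv_to; apply: funext => p; rewrite pmul_ser_delta0.
Qed.

Lemma pmul_ser_denom_coef_ser (f : C -> C) (g : {poly C}) (L K : nat) :
  (forall x, normc z < normc x -> abs_conv_to a x (f x)) ->
  (forall x, x != 0 -> x != z -> f x = g.[x] / (x ^+ L * (x - z) ^+ K)) ->
  pmul_ser ('X ^+ L * ('X - z%:P) ^+ K) a =1 coef_ser g.
Proof.
move=> a_conv fE; set Q := 'X ^+ L * ('X - z%:P) ^+ K.
pose d p := pmul_ser Q a p + (-1) * coef_ser g p.
have d_vanish : vanish_above d (P + size Q + size g).
  move=> p; move: (size Q) (size g) (vanish_above_pmul_ser (q := Q) a_vanish)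
    (vanish_above_pmul_ser (q := g) (@vanish_above_delta0 C)) => nQ ng hQ hg hp.
  by rewrite /d -pmul_ser_delta0 hQ ?hg ?mulr0 ?addr0 //; lia.
have d0 := abs_conv_to_eq0 d_vanish normc_z_gt0; move=> p; apply/eqP.
rewrite -subr_eq0 -mulN1r; apply/eqP/d0 => x hx; have x_neq0 := normc_gt_neq0 hx.
have x_neq_z : x != z by apply: contraTneq hx => ->; rewrite ltxx.
have -> : 0 = Q.[x] * f x + (-1) * g.[x].
  rewrite fE // /Q hornerM hornerXn horner_exp hornerXsubC.
  have xz_neq0 : x - z != 0 by rewrite subr_eq0.
  by field; rewrite !expf_neq0.
apply: abs_conv_toD; first exact: abs_conv_to_pmul_ser a_vanish x_neq0 (a_conv x hx).
by apply: abs_conv_toZ; apply: abs_conv_to_coef_ser.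
Qed.

Lemma abs_conv_to_rat (r : {poly C}) (l k : nat) :
  pmul_ser ('X ^+ l * ('X - z%:P) ^+ k) a =1 coef_ser r ->
  forall x, normc z < normc x -> abs_conv_to a x (r.[x] / (x ^+ l * (x - z) ^+ k)).
Proof.
move=> aE x hx; set a1 := pmul_ser (('X - z%:P) ^+ k) a.
have a1_vanish := vanish_above_pmul_ser (q := ('X - z%:P) ^+ k) a_vanish.
have a1_conv : forall x1, normc z < normc x1 -> abs_conv_to a1 x1 (r.[x1] / (x1 - 0) ^+ l).
  apply: (abs_conv_to_divXsubCn a1_vanish normc_z_gt0); first by rewrite normc0 ltW // normc_z_gt0.
  move=> x1 hx1; rewrite polyC0 subr0.
  have := abs_conv_to_coef_ser r (normc_gt_neq0 hx1); congr abs_conv_to.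
  by apply: funext => p; rewrite -aE pmul_serM.
have := abs_conv_to_divXsubCn a_vanish normc_z_gt0 (lexx _) a1_conv hx.
by rewrite subr0 invfM mulrA.
Qed.

End RationalLaurentSeries.

Lemma lin_functional0 (C : fieldType) (W : lmodType C) (alpha : W -> C) :
  lin_functional alpha -> alpha 0 = 0.
Proof.
move=> alpha_lin; apply: addr_self_eq0.
by have := alpha_lin 1 0 0; rewrite scale1r addr0 mul1r.
Qed.

Section PzLinear.
Variable R : realType.
Local Notation C := R[i].
Variables (V : lmodType C) (Y : vop V V) (vac om : V) (pi : int -> V -> V)
  (W : lmodType C) (YW : vop V W) (alpha : W -> C).
Hypotheses (V_VOA : is_VOA Y vac om pi) (W_module : is_weak_module Y vac YW)
  (alpha_lin : lin_functional alpha).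

Local Notation Ypair v w := (Yo_pair Y om pi YW alpha v w).
Local Notation Ydual v := (Ystar Y om pi YW v alpha).

Lemma Yo_pair_vanish_above v w : exists P, vanish_above (Ypair v w) P.
Proof.
have [K hK] := Yo_coef_vanish_below V_VOA W_module v w.
exists (absz (K + 1)) => p hp; rewrite /Yo_pair hK ?lin_functional0 //; lia.
Qed.

Lemma pmul_dser_Ystar q v p w : pmul_dser q (Ydual v) p w = pmul_ser q (Ypair v w) p.
Proof. by []. Qed.

Variable z : C.

Lemma poly_iff_Ystar_power_series :
  (forall v, exists l k : nat, forall w, exists r : {poly C},
     pmul_ser ('X ^+ l * ('X - z%:P) ^+ k) (Ypair v w) =1 coef_ser r) <->
  (forall v, exists l k : nat, forall p : int, p < 0 ->
     pmul_dser ('X ^+ l * ('X - z%:P) ^+ k) (Ydual v) p = (fun _ => 0)).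
Proof.
split=> [hpoly v | hdual v].
  have [l [k hlk]] := hpoly v; exists l, k => p p_lt0; apply: funext => w.
  have [r rE] := hlk w; by rewrite pmul_dser_Ystar rE /coef_ser ifN // -ltNge.
have [l [k hlk]] := hdual v; exists l, k => w; set Q := 'X ^+ l * ('X - z%:P) ^+ k.
have [P a_vanish] := Yo_pair_vanish_above v w.
have Qa_vanish := vanish_above_pmul_ser (q := Q) a_vanish.
exists (\poly_(i < (P + size Q).+1) pmul_ser Q (Ypair v w) i%:Z) => p.
rewrite /coef_ser coef_poly; case: (leP 0 p) => p_ge0.
  case: ltnP => hs; first by congr pmul_ser; lia.
  by apply: Qa_vanish; move: hs p_ge0; move: (P + size Q)%N => m; lia.
by have := congr1 (fun F => F w) (hlk p p_ge0).
Qed.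

Lemma Ystar_power_series_iff_laurent :
  (forall v, exists l k : nat, forall p : int, p < 0 ->
     pmul_dser ('X ^+ l * ('X - z%:P) ^+ k) (Ydual v) p = (fun _ => 0)) <->
  (forall v, exists (k : nat) (N : int), forall p : int, p < N ->
     pmul_dser (('X - z%:P) ^+ k) (Ydual v) p = (fun _ => 0)).
Proof.
split=> [hdual v | hlaurent v].
  have [l [k hlk]] := hdual v; exists k, (- l%:Z) => p hp; apply: funext => w.
  have := congr1 (fun F => F w) (hlk (p + l%:Z) ltac:(lia)).
  by rewrite !pmul_dser_Ystar pmul_serXnM addrK.
have [k [N hkN]] := hlaurent v; exists (absz N), k => p hp; apply: funext => w.
rewrite pmul_dser_Ystar pmul_serXnM.
by have := congr1 (fun F => F w) (hkN (p - (absz N)%:Z) ltac:(lia)).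
Qed.

Hypothesis z_neq0 : z != 0.

Lemma Pz_linear_iff_poly :
  Pz_linear Y om pi YW z alpha <->
  forall v, exists l k : nat, forall w, exists r : {poly C},
    pmul_ser ('X ^+ l * ('X - z%:P) ^+ k) (Ypair v w) =1 coef_ser r.
Proof.
split=> [hPz v | hpoly v].
  have [L [K hLK]] := hPz v; exists L, K => w.
  have [f [f_conv [_ [pole0 polez]]]] := hLK w.
  have [g fE] := pole_orders_common_denom z_neq0 pole0 polez.
  have [P a_vanish] := Yo_pair_vanish_above v w.
  exists g; apply: (pmul_ser_denom_coef_ser z_neq0 a_vanish) fE => x.
  by rewrite -ltc_normc; apply: f_conv.
have [l [k hlk]] := hpoly v; exists l, k => w; have [r rE] := hlk w.
have [P a_vanish] := Yo_pair_vanish_above v w.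
exists (fun x => r.[x] / (x ^+ l * (x - z) ^+ k)); split.
  move=> x; rewrite ltc_normc; exact: (abs_conv_to_rat z_neq0 a_vanish rE).
by split; [exists r, l, k | split; [exists r, k | exists r, l]].
Qed.

End PzLinear.

Theorem lemma3p4 (R : realType) (V : lmodType R[i]) (Y : vop V V) (vac om : V)
    (pi : int -> V -> V) (W : lmodType R[i]) (YW : vop V W)
    (z : R[i]) (alpha : W -> R[i]) :
  is_VOA Y vac om pi ->
  is_weak_module Y vac YW ->
  z != 0 ->
  lin_functional alpha ->
  let Da := Pz_linear Y om pi YW z alpha in
  let Db := forall v : V, exists l k : nat, forall w : W,
      exists r : {poly R[i]}, forall p : int,
        pmul_ser ('X ^+ l * ('X - z%:P) ^+ k) (Yo_pair Y om pi YW alpha v w) p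
        = if 0 <= p then r`_(`|p|%N) else 0 in
  let Dc := forall v : V, exists l k : nat, forall p : int, p < 0 ->
        pmul_dser ('X ^+ l * ('X - z%:P) ^+ k) (Ystar Y om pi YW v alpha) p
        = (fun _ => 0) in
  let Dd := forall v : V, exists k : nat, exists N : int, forall p : int, p < N ->
        pmul_dser (('X - z%:P) ^+ k) (Ystar Y om pi YW v alpha) p
        = (fun _ => 0) in
  (Da <-> Db) /\ (Da <-> Dc) /\ (Da <-> Dd).
Proof.
move=> V_VOA W_module z_neq0 alpha_lin Da Db Dc Dd.
have ab : Da <-> Db := Pz_linear_iff_poly V_VOA W_module alpha_lin z_neq0.
have bc : Db <-> Dc := poly_iff_Ystar_power_series V_VOA W_module alpha_lin z.
have cd : Dc <-> Dd := Ystar_power_series_iff_laurent Y om pi YW alpha z.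
by split; last split; [exact: ab | rewrite ab | rewrite ab bc].
Qed.
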